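(* Let $Q$ be a quiver and $\theta\in\mathbb{Z}^{Q_0}$ with $\nabla(Q,\theta)\ne\emptyset$. Suppose that some vertex $v$ has exactly two arrows $a,b$ attached to it, where $a$ connects $v$ with a vertex $u$ and $b$ connects $v$ with a vertex $w$ ($u,v,w$ distinct), and either both $a,b$ point towards $v$ or both point away from $v$. Let $Q'$ be obtained from $Q$ by replacing $a,b$ by the reversed arrows $\hat a,\hat b$, and let $\theta'\in\mathbb{Z}^{Q'_0}=\mathbb{Z}^{Q_0}$ be given by $\theta'(v)=-\theta(v)$, $\theta'(u)=\theta(u)+\theta(v)$, $\theta'(w)=\theta(w)+\theta(v)$, and $\theta'(z)=\theta(z)$ for all other vertices $z$. Then $\nabla(Q,\theta)$ and $\nabla(Q',\theta')$ are integral-affinely equivalent.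
   Context: A quiver $Q$: vertices $Q_0$, arrows $Q_1$, $a$ from $a^-$ to $a^+$. $\nabla(Q,\theta)=\{x\in\mathbb{R}_{\ge0}^{Q_1}\mid\forall v:\ \theta(v)=\sum_{a^+=v}x(a)-\sum_{a^-=v}x(a)\}$. Lattice polyhedra $\nabla_i\subset V_i$ with lattices $M_i$ (here $\mathbb{Z}^{Q_1}$, $\mathbb{Z}^{Q'_1}$) are integral-affinely equivalent if an affine isomorphism $\mathrm{AffSpan}(\nabla_1)\to\mathrm{AffSpan}(\nabla_2)$ maps $\mathrm{AffSpan}(\nabla_1)\cap M_1$ onto $\mathrm{AffSpan}(\nabla_2)\cap M_2$ and $\nabla_1$ onto $\nabla_2$. *)

From HB Require Import structures.
From mathcomp Require Import all_boot all_order all_algebra.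
From mathcomp Require Import reals.
Set Implicit Arguments. Unset Strict Implicit. Unset Printing Implicit Defensive.
Import Order.TTheory GRing.Theory Num.Theory.
Local Open Scope ring_scope.

(* A finite quiver is given by a finite vertex type V, a finite arrow type A,
   and source/target maps  src a = a^-  and  tgt a = a^+. *)

Definition nabla (R : realType) (V A : finType) (src tgt : A -> V)
    (theta : V -> int) (x : A -> R) : Prop :=
  (forall a, 0 <= x a) /\
  (forall v, (theta v)%:~R = \sum_(a | tgt a == v) x a - \sum_(a | src a == v) x a).

Definition aff_span (R : realType) (A : finType) (P : (A -> R) -> Prop)
    (y : A -> R) : Prop :=
  exists (n : nat) (p : 'I_n -> A -> R) (c : 'I_n -> R),
    (forall i, P (p i)) /\ \sum_(i < n) c i = 1 /\
    (forall a, y a = \sum_(i < n) c i * p i a).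

Definition lattice_pt (R : realType) (A : finType) (x : A -> R) : Prop :=
  forall a, x a \is a Num.int.

Definition int_aff_equiv (R : realType) (A1 A2 : finType)
    (P1 : (A1 -> R) -> Prop) (P2 : (A2 -> R) -> Prop) : Prop :=
  exists (f : (A1 -> R) -> (A2 -> R)) (g : (A2 -> R) -> (A1 -> R)),
    (forall x, aff_span P1 x -> aff_span P2 (f x)) /\
        (forall y, aff_span P2 y -> aff_span P1 (g y)) /\
        (forall x, aff_span P1 x -> g (f x) = x) /\
        (forall y, aff_span P2 y -> f (g y) = y) /\
        (forall x y (l : R), aff_span P1 x -> aff_span P1 y ->
           f (fun a => (1 - l) * x a + l * y a) =
           (fun a => (1 - l) * f x a + l * f y a)) /\
        (forall x, aff_span P1 x -> (lattice_pt x <-> lattice_pt (f x))) /\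
      (forall x, aff_span P1 x -> (P1 x <-> P2 (f x))).

Definition rev2 (V A : finType) (src tgt : A -> V) (a b : A) : A -> V :=
  fun c => if (c == a) || (c == b) then tgt c else src c.

Definition theta' (V : finType) (theta : V -> int) (u v w : V) : V -> int :=
  fun z => if z == v then - theta v
           else if (z == u) || (z == w) then theta z + theta v
           else theta z.

From HB Require Import structures.
From mathcomp Require Import all_boot all_order all_algebra perm.
From mathcomp Require Import reals.
From mathcomp Require Import ring.
From Stdlib Require Import FunctionalExtensionality.
Set Implicit Arguments. Unset Strict Implicit. Unset Printing Implicit Defensive.
Import Order.TTheory GRing.Theory Num.Theory.
Local Open Scope ring_scope.

(* The equivalence is the coordinate swap x |-> x o (a b).  On incidence
   vectors, reversing a and b and then exchanging them acts on the column of
   every arrow by the involution k |-> k' with k'(v) = -k(v),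
   k'(u) = k(u) + k(v), k'(w) = k(w) + k(v), which fixes the columns of the
   arrows not attached to v since their v-entry is 0.  So the net flow of the
   swapped point in Q' is the image of the net flow in Q, theta' is the image
   of theta, and the involution is injective: the swap maps nabla(Q, theta)
   onto nabla(Q', theta').  A coordinate permutation preserves affine spans and
   lattice points. *)

Lemma aff_span_comp (R : realType) (A1 A2 : finType)
    (P1 : (A1 -> R) -> Prop) (P2 : (A2 -> R) -> Prop) (e : A2 -> A1) :
  (forall x, P1 x -> P2 (x \o e)) ->
  forall x, aff_span P1 x -> aff_span P2 (x \o e).
Proof.
move=> P12 x [n [p [c [Pp [c1 xE]]]]].
exists n, (fun i => p i \o e), c; split; first by move=> i; apply: P12.
by split=> // a; rewrite /= xE.
Qed.

Lemma lattice_pt_comp (R : realType) (A1 A2 : finType)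
    (e : A2 -> A1) (x : A1 -> R) :
  lattice_pt x -> lattice_pt (x \o e).
Proof. by move=> xZ a; apply: xZ. Qed.

Lemma int_aff_equiv_comp (R : realType) (A1 A2 : finType)
    (P1 : (A1 -> R) -> Prop) (P2 : (A2 -> R) -> Prop) (e : A2 -> A1) (e' : A1 -> A2) :
  cancel e e' -> cancel e' e ->
  (forall x, P1 x <-> P2 (x \o e)) -> int_aff_equiv P1 P2.
Proof.
move=> eK e'K P12.
have compK x : x \o e' \o e = x by apply: functional_extensionality => c /=; rewrite eK.
have compK' y : y \o e \o e' = y by apply: functional_extensionality => c /=; rewrite e'K.
have P21 y : P2 y -> P1 (y \o e') by rewrite -{1}[y]compK -P12.
exists (fun x => x \o e), (fun y => y \o e'); split.
  by move=> x; apply: aff_span_comp => y /P12.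
split; first by move=> y; apply: aff_span_comp.
split; first by move=> x _; exact: compK'.
split; first by move=> y _; exact: compK.
split; first by [].
split; last by move=> x _; exact: P12.
move=> x _; split; first exact: lattice_pt_comp.
by rewrite -{2}[x]compK'; apply: lattice_pt_comp.
Qed.

Section Mutation.
Variables (V : finType) (u v w : V).

Definition mutate (M : zmodType) (k : V -> M) (z : V) : M :=
  if z == v then - k v else if (z == u) || (z == w) then k z + k v else k z.

Lemma theta'E (theta : V -> int) : theta' theta u v w = mutate theta.
Proof. by []. Qed.

Lemma mutate_ext (M : zmodType) (k1 k2 : V -> M) :
  (forall z, k1 z = k2 z) -> forall z, mutate k1 z = mutate k2 z.
Proof. by move=> k12 z; rewrite /mutate !k12. Qed.

Lemma mutateK (M : zmodType) (k : V -> M) z : mutate (mutate k) z = k z.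
Proof.
rewrite /mutate eqxx; have [-> | _] := eqVneq z v; first exact: opprK.
by case: ifP => zuw; rewrite zuw ?addrK.
Qed.

Lemma mutate_inj (M : zmodType) (k1 k2 : V -> M) :
  (forall z, mutate k1 z = mutate k2 z) <-> (forall z, k1 z = k2 z).
Proof.
split=> [k12 z | ]; last exact: mutate_ext.
by rewrite -mutateK (mutate_ext k12) mutateK.
Qed.

Lemma mutate_id (M : zmodType) (k : V -> M) z : k v = 0 -> mutate k z = k z.
Proof. by move=> kv0; rewrite /mutate kv0 oppr0 addr0 if_same; case: eqP => [->|]. Qed.

Lemma mutateB (M : zmodType) (k1 k2 : V -> M) z :
  mutate (fun y => k1 y - k2 y) z = mutate k1 z - mutate k2 z.
Proof.
rewrite /mutate; case: ifP => _; first exact: opprD.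
by case: ifP => _ //; rewrite opprD addrACA.
Qed.

Lemma mutate_additive (M N : zmodType) (f : {additive M -> N}) (k : V -> M) z :
  f (mutate k z) = mutate (f \o k) z.
Proof.
rewrite /mutate; case: ifP => _; first exact: raddfN.
by case: ifP => _ //; rewrite raddfD.
Qed.

Lemma mutate_sum (R : ringType) (I : finType) (x : I -> R) (k : I -> V -> R) z :
  \sum_i x i * mutate (k i) z = mutate (fun y => \sum_i x i * k i y) z.
Proof.
rewrite /mutate; case: ifP => _.
  by rewrite -sumrN; apply: eq_bigr => i _; rewrite mulrN.
by case: ifP => _ //; rewrite -big_split; apply: eq_bigr => i _; rewrite mulrDr.
Qed.

Hypotheses (uv : u != v) (vw : v != w) (uw : u != w).

Lemma mutate_indicator (R : ringType) y z :
  mutate (fun x => (x == y)%:R : R) z =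
  if y == v then (z == u)%:R + (z == w)%:R - (z == v)%:R else (z == y)%:R.
Proof.
have [-> | yv] := eqVneq y v; last by rewrite mutate_id // eq_sym (negbTE yv).
rewrite /mutate eqxx; have [-> | _] := eqVneq z v.
  by rewrite eq_sym (negbTE uv) (negbTE vw) add0r sub0r.
have [-> | _] := eqVneq z u; first by rewrite (negbTE uw) /= add0r addr0 subr0.
have [_ | _] := eqVneq z w; first by rewrite add0r subr0.
by rewrite addr0 subr0.
Qed.

End Mutation.

Section Incidence.
Variables (V A : finType) (src tgt : A -> V).

Definition netflow (R : ringType) (x : A -> R) (z : V) : R :=
  \sum_(c | tgt c == z) x c - \sum_(c | src c == z) x c.

Definition incidence (R : ringType) (c : A) (z : V) : R :=
  (z == tgt c)%:R - (z == src c)%:R.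

Lemma netflowE (R : ringType) (x : A -> R) z :
  netflow x z = \sum_c x c * incidence R c z.
Proof.
rewrite /netflow (big_mkcond (fun c => tgt c == z)).
rewrite (big_mkcond (fun c => src c == z)) -sumrB; apply: eq_bigr => c _.
rewrite /incidence mulrBr ![z == _]eq_sym.
by rewrite !mulr_natr !mulrb.
Qed.

End Incidence.

Section Reversal.
Variables (V A : finType) (src tgt : A -> V) (u v w : V) (a b : A).
Hypotheses (uv : u != v) (vw : v != w) (uw : u != w).
Hypothesis attached : forall c, (src c == v) || (tgt c == v) = (c == a) || (c == b).
Hypothesis orient : (src a = u /\ tgt a = v /\ src b = w /\ tgt b = v) \/
  (src a = v /\ tgt a = u /\ src b = v /\ tgt b = w).

Lemma incidence_rev2 (R : comRingType) c z :
  incidence (rev2 src tgt a b) (rev2 tgt src a b) R (tperm a b c) z =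
  mutate u v w (incidence src tgt R c) z.
Proof.
rewrite /incidence /rev2; case: tpermP => [-> | -> | /eqP ca /eqP cb].
- rewrite eqxx orbT.
  by case: orient => [[-> [-> [-> ->]]] | [-> [-> [-> ->]]]];
    rewrite mutateB !mutate_indicator // eqxx (negbTE uv); ring.
- rewrite eqxx.
  by case: orient => [[-> [-> [-> ->]]] | [-> [-> [-> ->]]]];
    rewrite mutateB !mutate_indicator // eqxx [w == v]eq_sym (negbTE vw); ring.
- have := attached c; rewrite (negbTE ca) (negbTE cb) => /norP[sv tv].
  by rewrite mutate_id // eq_sym (negbTE tv) eq_sym (negbTE sv) subr0.
Qed.

Lemma netflow_rev2 (R : comRingType) (x : A -> R) z :
  netflow (rev2 src tgt a b) (rev2 tgt src a b) (x \o tperm a b) z =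
  mutate u v w (netflow src tgt x) z.
Proof.
rewrite netflowE (reindex_inj (@perm_inj _ (tperm a b))) /=.
under eq_bigr do rewrite tpermK incidence_rev2.
by rewrite mutate_sum; apply: mutate_ext => y; rewrite netflowE.
Qed.

Lemma nabla_rev2 (R : realType) (theta : V -> int) (x : A -> R) :
  nabla src tgt theta x <->
  nabla (rev2 src tgt a b) (rev2 tgt src a b) (theta' theta u v w) (x \o tperm a b).
Proof.
have balance_rev2 :
  (forall z, (theta' theta u v w z)%:~R =
     netflow (rev2 src tgt a b) (rev2 tgt src a b) (x \o tperm a b) z) <->
  (forall z, (theta z)%:~R = netflow src tgt x z).
  rewrite theta'E; split=> balance.
    by apply/(mutate_inj u v w) => z; rewrite -netflow_rev2 -balance mutate_additive.
  by move=> z; rewrite mutate_additive netflow_rev2; apply: mutate_ext.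
split=> -[x_ge0 balance]; split.
- by move=> c; apply: x_ge0.
- exact/balance_rev2.
- by move=> c; rewrite -(tpermK a b c); apply: x_ge0.
- exact/balance_rev2.
Qed.

End Reversal.

Theorem proposition4p8 (R : realType) (V A : finType) (src tgt : A -> V)
    (theta : V -> int) (u v w : V) (a b : A) :
  (exists x : A -> R, nabla src tgt theta x) ->
  u != v -> v != w -> u != w ->
  (* a and b are exactly the arrows attached to v *)
  (forall c : A, (src c == v) || (tgt c == v) = (c == a) || (c == b)) ->
  (* both point towards v, or both point away from v *)
  ((src a = u /\ tgt a = v /\ src b = w /\ tgt b = v) \/
   (src a = v /\ tgt a = u /\ src b = v /\ tgt b = w)) ->
  int_aff_equiv (nabla (R := R) src tgt theta)
    (nabla (R := R) (rev2 src tgt a b) (rev2 tgt src a b) (theta' theta u v w)).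
Proof.
move=> _ uv vw uw attached orient.
apply: (int_aff_equiv_comp (tpermK a b) (tpermK a b)) => x.
exact: nabla_rev2.
Qed.
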